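(* Let $\mathcal C$ be either the category $\mathbf{MC}$ of small monoidal categories and strong monoidal functors, or the category $\mathbf{SMC}$ of small symmetric monoidal categories and symmetric strong monoidal functors, with the nullhomotopy structure $\Theta$ described in the context. Then for every object $\mathcal M$ of $\mathcal C$, the identity functor $\mathrm{id}_{\mathcal M}$ has a strong $\Theta$-kernel and a strong $\Theta$-cokernel whose objects are $\Theta$-trivial monoidal categories.
   Context: For a monoidal functor $F\colon\mathcal M\to\mathcal N$ (strong: coherence maps $e_F\colon I_{\mathcal N}\to F I_{\mathcal M}$ and $m_F$ invertible), $\Theta(F)$ is the set of monoidal natural isomorphisms $F\Rightarrow\Delta_{I_{\mathcal N}}$ to the constant functor at the unit. For $P\colon\mathcal M'\to\mathcal M$, $Q\colon\mathcal N\to\mathcal N'$ and $\varphi\in\Theta(F)$, $Q\bullet\varphi\bullet P\in\Theta(QFP)$ has components $e_Q^{-1}\circ Q(\varphi_{PX})$; write $\varphi\bullet P$, $Q\bullet\varphi$ when the other functor is an identity. A monoidal category $\mathcal Z$ is $\Theta$-trivial if $\Theta(\mathrm{id}_{\mathcal Z})\neq\emptyset$. A $\Theta$-kernel of $F\colon\mathcal M\to\mathcal N$ is $(\mathcal K,k,\theta)$, $k\colon\mathcal K\to\mathcal M$, $\theta\in\Theta(Fk)$, such that for all $(\mathcal H,h,\varphi)$ with $\varphi\in\Theta(Fh)$ there is a unique $h'$ with $kh'=h$ and $\theta\bullet h'=\varphi$. It is strong if moreover for every $a\colon\mathcal A\to\mathcal K$ and $\varphi\in\Theta(ka)$ with $F\bullet\varphi=\theta\bullet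 a$ there is a unique $\alpha\in\Theta(a)$ with $k\bullet\alpha=\varphi$. (Strong) $\Theta$-cokernels are defined dually: $(\mathcal C,c,\theta)$ with $c\colon\mathcal N\to\mathcal C$, $\theta\in\Theta(cF)$, such that every $(\mathcal D,d,\psi)$ with $\psi\in\Theta(dF)$ factors as $d=d'c$ with $d'\bullet\theta=\psi$ for a unique $d'$; strong if moreover for every $a\colon\mathcal C\to\mathcal A$ and $\varphi\in\Theta(ac)$ with $\varphi\bullet F=a\bullet\theta$ there is a unique $\alpha\in\Theta(a)$ with $\alpha\bullet c=\varphi$. *)

Record Category := {
  Ob :> Type;
  Hom : Ob -> Ob -> Type;
  idm : forall a, Hom a a;
  cmp : forall a b c, Hom b c -> Hom a b -> Hom a c;
  cmp_idl : forall a b (f : Hom a b), cmp a b b (idm b) f = f;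
  cmp_idr : forall a b (f : Hom a b), cmp a a b f (idm a) = f;
  cmp_assoc : forall a b c d (f : Hom a b) (g : Hom b c) (h : Hom c d),
      cmp a c d h (cmp a b c g f) = cmp a b d (cmp b c d h g) f
}.
Arguments Hom {_} a b.
Arguments idm {_} a.
Arguments cmp {_ a b _} g f.
Infix "∘" := cmp (at level 40, left associativity).

Definition is_iso {C : Category} {a b : C} (f : Hom a b) : Prop :=
  exists g : Hom b a, g ∘ f = idm a /\ f ∘ g = idm b.

Record MonCat := {
  mcat :> Category;
  tens : mcat -> mcat -> mcat;
  tensm : forall a b c d, Hom a b -> Hom c d -> Hom (tens a c) (tens b d);
  munit : mcat;
  assoc : forall a b c, Hom (tens (tens a b) c) (tens a (tens b c));
  lunit : forall a, Hom (tens munit a) a;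
  runit : forall a, Hom (tens a munit) a;
  tensm_id : forall a c, tensm a a c c (idm a) (idm c) = idm (tens a c);
  tensm_cmp : forall a b e c d f (f1 : Hom a b) (f2 : Hom b e)
      (g1 : Hom c d) (g2 : Hom d f),
      tensm a e c f (f2 ∘ f1) (g2 ∘ g1)
      = tensm b e d f f2 g2 ∘ tensm a b c d f1 g1;
  assoc_iso : forall a b c, is_iso (assoc a b c);
  lunit_iso : forall a, is_iso (lunit a);
  runit_iso : forall a, is_iso (runit a);
  assoc_nat : forall a a' b b' c c' (f : Hom a a') (g : Hom b b') (h : Hom c c'),
      assoc a' b' c' ∘ tensm _ _ _ _ (tensm _ _ _ _ f g) h
      = tensm _ _ _ _ f (tensm _ _ _ _ g h) ∘ assoc a b c;
  lunit_nat : forall a b (f : Hom a b),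
      lunit b ∘ tensm _ _ _ _ (idm munit) f = f ∘ lunit a;
  runit_nat : forall a b (f : Hom a b),
      runit b ∘ tensm _ _ _ _ f (idm munit) = f ∘ runit a;
  pentagon : forall a b c d,
      assoc a b (tens c d) ∘ assoc (tens a b) c d
      = tensm _ _ _ _ (idm a) (assoc b c d) ∘ assoc a (tens b c) d
        ∘ tensm _ _ _ _ (assoc a b c) (idm d);
  triangle : forall a b,
      tensm _ _ _ _ (idm a) (lunit b) ∘ assoc a munit b
      = tensm _ _ _ _ (runit a) (idm b)
}.
Arguments tens {m} a b.
Arguments tensm {m a b c d} f g.
Arguments munit m : clear implicits.
Arguments assoc {m} a b c.
Arguments lunit {m} a.
Arguments runit {m} a.

Record SymMonCat := {
  smcat :> MonCat;
  braid : forall a b : smcat, Hom (tens a b) (tens b a);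
  braid_nat : forall a a' b b' (f : Hom a a') (g : Hom b b'),
      braid a' b' ∘ tensm f g = tensm g f ∘ braid a b;
  braid_invol : forall a b, braid b a ∘ braid a b = idm (tens a b);
  hexagon : forall a b c,
      assoc b c a ∘ braid a (tens b c) ∘ assoc a b c
      = tensm (idm b) (braid a c) ∘ assoc b a c ∘ tensm (braid a b) (idm c)
}.
Arguments braid {s} a b.

(* Data of a monoidal functor; e_F : I -> F I (with its inverse, as data)
   and m_F : F a (x) F b -> F (a (x) b).  The axioms are in [is_monfun]. *)
Record MonFun (M N : MonCat) := {
  fob :> M -> N;
  fmap : forall a b : M, Hom a b -> Hom (fob a) (fob b);
  fe : Hom (munit N) (fob (munit M));
  fe_inv : Hom (fob (munit M)) (munit N);
  fm : forall a b : M, Hom (tens (fob a) (fob b)) (fob (tens a b))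
}.
Arguments fob {M N} m _.
Arguments fmap {M N} m {a b} f.
Arguments fe {M N} m.
Arguments fe_inv {M N} m.
Arguments fm {M N} m a b.

Record is_monfun {M N : MonCat} (F : MonFun M N) : Prop := {
  fmap_id : forall a, fmap F (idm a) = idm (F a);
  fmap_cmp : forall a b c (f : Hom a b) (g : Hom b c),
      fmap F (g ∘ f) = fmap F g ∘ fmap F f;
  fe_invl : fe_inv F ∘ fe F = idm (munit N);
  fe_invr : fe F ∘ fe_inv F = idm (F (munit M));
  fm_iso : forall a b, is_iso (fm F a b);
  fm_nat : forall a a' b b' (f : Hom a a') (g : Hom b b'),
      fm F a' b' ∘ tensm (fmap F f) (fmap F g) = fmap F (tensm f g) ∘ fm F a b;
  fm_assoc : forall a b c,
      fmap F (assoc a b c) ∘ fm F (tens a b) c ∘ tensm (fm F a b) (idm (F c))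
      = fm F a (tens b c) ∘ tensm (idm (F a)) (fm F b c) ∘ assoc (F a) (F b) (F c);
  fm_lunit : forall b,
      fmap F (lunit b) ∘ fm F (munit M) b ∘ tensm (fe F) (idm (F b)) = lunit (F b);
  fm_runit : forall a,
      fmap F (runit a) ∘ fm F a (munit M) ∘ tensm (idm (F a)) (fe F) = runit (F a)
}.

Definition is_symfun {M N : SymMonCat} (F : MonFun M N) : Prop :=
  forall a b : M, fmap F (braid a b) ∘ fm F a b = fm F b a ∘ braid (F a) (F b).

Definition fcomp {M N P : MonCat} (G : MonFun N P) (F : MonFun M N) : MonFun M P :=
  {| fob := fun x => G (F x);
     fmap := fun a b f => fmap G (fmap F f);
     fe := fmap G (fe F) ∘ fe G;
     fe_inv := fe_inv G ∘ fmap G (fe_inv F);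
     fm := fun a b => fmap G (fm F a b) ∘ fm G (F a) (F b) |}.

Definition idF (M : MonCat) : MonFun M M :=
  {| fob := fun x => x;
     fmap := fun a b f => f;
     fe := idm (munit M);
     fe_inv := idm (munit M);
     fm := fun a b => idm (tens a b) |}.

(* phi in Theta(F): a monoidal natural isomorphism F => Delta_{I_N}, where the
   constant functor Delta_{I_N} has e = id_I and m = lambda_I : I (x) I -> I,
   and sends every morphism to id_I. *)
Definition is_theta {M N : MonCat} (F : MonFun M N)
    (phi : forall X : M, Hom (F X) (munit N)) : Prop :=
  (forall X, is_iso (phi X)) /\
  (forall X Y (f : Hom X Y), phi Y ∘ fmap F f = idm (munit N) ∘ phi X) /\
  (forall X Y, phi (tens X Y) ∘ fm F X Y = lunit (munit N) ∘ tensm (phi X) (phi Y)) /\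
  (phi (munit M) ∘ fe F = idm (munit N)).

Definition whisk {M' M N N' : MonCat} (Q : MonFun N N') (F : MonFun M N)
    (P : MonFun M' M) (phi : forall X : M, Hom (F X) (munit N))
  : forall X : M', Hom (Q (F (P X))) (munit N') :=
  fun X => fe_inv Q ∘ fmap Q (phi (P X)).

Definition theta_trivial (Z : MonCat) : Prop :=
  exists phi : forall X : Z, Hom (idF Z X) (munit Z), is_theta (idF Z) phi.

(* The ambient category C is presented by a type of objects O, their
   underlying monoidal categories U, and a predicate [ok] singling out the
   morphisms of C among the monoidal-functor data. *)
Section KerCoker.
Variables (O : Type) (U : O -> MonCat)
          (ok : forall A B : O, MonFun (U A) (U B) -> Prop).

Definition kfact {M N H K : O} (F : MonFun (U M) (U N)) (k : MonFun (U K) (U M))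
    (theta : forall X : U K, Hom (fcomp F k X) (munit (U N)))
    (h : MonFun (U H) (U M)) (phi : forall X : U H, Hom (fcomp F h X) (munit (U N)))
    (h' : MonFun (U H) (U K)) : Prop :=
  exists e : fcomp k h' = h,
    eq_rect (fcomp k h') (fun G => forall X : U H, Hom (F (G X)) (munit (U N)))
      (whisk (idF (U N)) (fcomp F k) h' theta) h e = phi.

Definition is_theta_kernel {M N : O} (F : MonFun (U M) (U N)) (K : O)
    (k : MonFun (U K) (U M)) (theta : forall X : U K, Hom (fcomp F k X) (munit (U N)))
  : Prop :=
  ok _ _ k /\ is_theta (fcomp F k) theta /\
  forall (H : O) (h : MonFun (U H) (U M))
         (phi : forall X : U H, Hom (fcomp F h X) (munit (U N))),
    ok _ _ h -> is_theta (fcomp F h) phi ->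
    (exists h' : MonFun (U H) (U K), ok _ _ h' /\ kfact F k theta h phi h') /\
    (forall h1 h2 : MonFun (U H) (U K), ok _ _ h1 -> ok _ _ h2 ->
       kfact F k theta h phi h1 -> kfact F k theta h phi h2 -> h1 = h2).

Definition is_strong_theta_kernel {M N : O} (F : MonFun (U M) (U N)) (K : O)
    (k : MonFun (U K) (U M)) (theta : forall X : U K, Hom (fcomp F k X) (munit (U N)))
  : Prop :=
  is_theta_kernel F K k theta /\
  forall (A : O) (a : MonFun (U A) (U K))
         (phi : forall X : U A, Hom (fcomp k a X) (munit (U M))),
    ok _ _ a -> is_theta (fcomp k a) phi ->
    (forall X, whisk F (fcomp k a) (idF (U A)) phi X
               = whisk (idF (U N)) (fcomp F k) a theta X) ->
    exists alpha : forall X : U A, Hom (a X) (munit (U K)),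
      is_theta a alpha /\
      (forall X, whisk k a (idF (U A)) alpha X = phi X) /\
      (forall beta : forall X : U A, Hom (a X) (munit (U K)),
         is_theta a beta -> (forall X, whisk k a (idF (U A)) beta X = phi X) ->
         forall X, beta X = alpha X).

Definition cfact {M N D C : O} (F : MonFun (U M) (U N)) (c : MonFun (U N) (U C))
    (theta : forall X : U M, Hom (fcomp c F X) (munit (U C)))
    (d : MonFun (U N) (U D)) (psi : forall X : U M, Hom (fcomp d F X) (munit (U D)))
    (d' : MonFun (U C) (U D)) : Prop :=
  exists e : fcomp d' c = d,
    eq_rect (fcomp d' c) (fun G => forall X : U M, Hom (G (F X)) (munit (U D)))
      (whisk d' (fcomp c F) (idF (U M)) theta) d e = psi.

Definition is_theta_cokernel {M N : O} (F : MonFun (U M) (U N)) (C : O)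
    (c : MonFun (U N) (U C)) (theta : forall X : U M, Hom (fcomp c F X) (munit (U C)))
  : Prop :=
  ok _ _ c /\ is_theta (fcomp c F) theta /\
  forall (D : O) (d : MonFun (U N) (U D))
         (psi : forall X : U M, Hom (fcomp d F X) (munit (U D))),
    ok _ _ d -> is_theta (fcomp d F) psi ->
    (exists d' : MonFun (U C) (U D), ok _ _ d' /\ cfact F c theta d psi d') /\
    (forall d1 d2 : MonFun (U C) (U D), ok _ _ d1 -> ok _ _ d2 ->
       cfact F c theta d psi d1 -> cfact F c theta d psi d2 -> d1 = d2).

Definition is_strong_theta_cokernel {M N : O} (F : MonFun (U M) (U N)) (C : O)
    (c : MonFun (U N) (U C)) (theta : forall X : U M, Hom (fcomp c F X) (munit (U C)))
  : Prop :=
  is_theta_cokernel F C c theta /\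
  forall (A : O) (a : MonFun (U C) (U A))
         (phi : forall Y : U N, Hom (fcomp a c Y) (munit (U A))),
    ok _ _ a -> is_theta (fcomp a c) phi ->
    (forall X, whisk (idF (U A)) (fcomp a c) F phi X
               = whisk a (fcomp c F) (idF (U M)) theta X) ->
    exists alpha : forall Y : U C, Hom (a Y) (munit (U A)),
      is_theta a alpha /\
      (forall Y, whisk (idF (U A)) a c alpha Y = phi Y) /\
      (forall beta : forall Y : U C, Hom (a Y) (munit (U A)),
         is_theta a beta -> (forall Y, whisk (idF (U A)) a c beta Y = phi Y) ->
         forall Y, beta Y = alpha Y).

Definition kernel_cokernel_of_id (M : O) : Prop :=
  (exists (K : O) (k : MonFun (U K) (U M))
          (theta : forall X : U K, Hom (fcomp (idF (U M)) k X) (munit (U M))),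
      is_strong_theta_kernel (idF (U M)) K k theta /\ theta_trivial (U K)) /\
  (exists (C : O) (c : MonFun (U M) (U C))
          (theta : forall X : U M, Hom (fcomp c (idF (U M)) X) (munit (U C))),
      is_strong_theta_cokernel (idF (U M)) C c theta /\ theta_trivial (U C)).

End KerCoker.

Definition MC_ok (A B : MonCat) (F : MonFun A B) : Prop := is_monfun F.
Definition SMC_ok (A B : SymMonCat) (F : MonFun (smcat A) (smcat B)) : Prop :=
  is_monfun F /\ is_symfun F.

From Stdlib Require Import ProofIrrelevance FunctionalExtensionality IndefiniteDescription Eqdep.

(* The Θ-kernel of id_M is the category of objects X of M equipped with an
   isomorphism x : X -> I, whose arrows commute with these isomorphisms and whose
   tensor is (X, x) ⊗ (Y, y) = (X ⊗ Y, λ_I ∘ (x ⊗ y)); a nullhomotopy φ of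
   h : H -> M is precisely a lift of h to this category along the forgetful
   functor.  The Θ-cokernel is the indiscrete category on the objects of M: a
   nullhomotopy ψ of d : M -> D lets d descend, sending the unique arrow a -> b
   to ψ_b⁻¹ ∘ ψ_a.  In both categories every object has exactly one arrow to the
   unit, which gives Θ-triviality and the strong parts.  In the symmetric case
   the braiding lifts to the kernel because c_{I,I} = id. *)

#[local] Arguments cmp_idl {c0 a b} f.
#[local] Arguments cmp_idr {c0 a b} f.
#[local] Arguments cmp_assoc {c0 a b c d} f g h.
#[local] Arguments lunit_iso {m} a.

Section CategoryFacts.
Context {C : Category}.

Lemma is_iso_idm (a : C) : is_iso (idm a).
Proof. exists (idm a); split; apply cmp_idl. Qed.

Lemma is_iso_cmp {a b c : C} (f : Hom a b) (g : Hom b c) :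
  is_iso f -> is_iso g -> is_iso (g ∘ f).
Proof.
  intros [f' [Hf' Hf]] [g' [Hg' Hg]]; exists (f' ∘ g'); split.
  - rewrite cmp_assoc, <- (cmp_assoc g g' f'), Hg', cmp_idr; exact Hf'.
  - rewrite cmp_assoc, <- (cmp_assoc f' f g), Hf, cmp_idr; exact Hg.
Qed.

Lemma iso_cancel_r {a b c : C} (x : Hom a b) (f g : Hom b c) :
  is_iso x -> f ∘ x = g ∘ x -> f = g.
Proof.
  intros [y [_ Hxy]] E.
  rewrite <- (cmp_idr f), <- (cmp_idr g), <- Hxy, !cmp_assoc, E; reflexivity.
Qed.

Lemma iso_cancel_l {a b c : C} (x : Hom b c) (f g : Hom a b) :
  is_iso x -> x ∘ f = x ∘ g -> f = g.
Proof.
  intros [y [Hyx _]] E.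
  rewrite <- (cmp_idl f), <- (cmp_idl g), <- Hyx, <- !cmp_assoc, E; reflexivity.
Qed.

Definition iso_inv {a b : C} (f : Hom a b) (Hf : is_iso f) : Hom b a :=
  proj1_sig (constructive_indefinite_description _ Hf).

Lemma iso_invK {a b : C} (f : Hom a b) (Hf : is_iso f) : iso_inv f Hf ∘ f = idm a.
Proof. exact (proj1 (proj2_sig (constructive_indefinite_description _ Hf))). Qed.

Lemma iso_Kinv {a b : C} (f : Hom a b) (Hf : is_iso f) : f ∘ iso_inv f Hf = idm b.
Proof. exact (proj2 (proj2_sig (constructive_indefinite_description _ Hf))). Qed.

End CategoryFacts.

Section MonoidalFacts.
Context {M : MonCat}.
Local Notation I := (munit M).

Lemma tensm_cmpl {a a' b c d : M} (f : Hom a a') (g : Hom c d) (h : Hom b c) :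
  tensm (g ∘ h) f = tensm g (idm a') ∘ tensm h f.
Proof. rewrite <- tensm_cmp, cmp_idl; reflexivity. Qed.

Lemma tensm_cmpr {a a' b c d : M} (f : Hom a a') (g : Hom c d) (h : Hom b c) :
  tensm f (g ∘ h) = tensm (idm a') g ∘ tensm f h.
Proof. rewrite <- tensm_cmp, cmp_idl; reflexivity. Qed.

Lemma is_iso_tensm {a b c d : M} (f : Hom a b) (g : Hom c d) :
  is_iso f -> is_iso g -> is_iso (tensm f g).
Proof.
  intros [f' [Hf' Hf]] [g' [Hg' Hg]]; exists (tensm f' g').
  rewrite <- !tensm_cmp, Hf', Hf, Hg', Hg, !tensm_id; split; reflexivity.
Qed.

Lemma tensm_unit_inj_l {a b : M} (f g : Hom a b) :
  tensm (idm I) f = tensm (idm I) g -> f = g.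
Proof.
  intros E; apply (iso_cancel_r (lunit a)); [apply lunit_iso|].
  rewrite <- !lunit_nat, E; reflexivity.
Qed.

Lemma tensm_unit_inj_r {a b : M} (f g : Hom a b) :
  tensm f (idm I) = tensm g (idm I) -> f = g.
Proof.
  intros E; apply (iso_cancel_r (runit a)); [apply runit_iso|].
  rewrite <- !runit_nat, E; reflexivity.
Qed.

(* Kelly: after whiskering by I, both sides reduce to the pentagon at (I, I, a, b)
   combined with the triangle. *)
Lemma lunit_tens (a b : M) :
  lunit (tens a b) ∘ assoc I a b = tensm (lunit a) (idm b).
Proof.
  apply tensm_unit_inj_l.
  apply (iso_cancel_r (assoc I (tens I a) b ∘ tensm (assoc I I a) (idm b))).
  { apply is_iso_cmp; [apply is_iso_tensm; [apply assoc_iso | apply is_iso_idm]|].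
    apply assoc_iso. }
  transitivity (assoc I a b ∘ tensm (tensm (runit I) (idm a)) (idm b)).
  - rewrite tensm_cmpr, <- cmp_assoc, (cmp_assoc _ (assoc I (tens I a) b)).
    rewrite <- pentagon, cmp_assoc, triangle, assoc_nat, tensm_id; reflexivity.
  - rewrite cmp_assoc, <- assoc_nat, <- cmp_assoc, <- tensm_cmpl, triangle; reflexivity.
Qed.

Lemma lunit_unit : lunit I = runit I.
Proof.
  assert (E : lunit (tens I I) = tensm (idm I) (lunit I)).
  { apply (iso_cancel_l (lunit I)); [apply lunit_iso|]. rewrite lunit_nat; reflexivity. }
  apply tensm_unit_inj_r; rewrite <- triangle, <- lunit_tens, E; reflexivity.
Qed.

Lemma triangle_unit :
  tensm (idm I) (lunit I) ∘ assoc I I I = tensm (lunit I) (idm I).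
Proof. rewrite triangle, <- lunit_unit; reflexivity. Qed.

End MonoidalFacts.

Section SymmetricFacts.
Context {M : SymMonCat}.
Local Notation I := (munit M).

Lemma is_iso_braid (a b : M) : is_iso (braid a b).
Proof. exists (braid b a); split; apply braid_invol. Qed.

(* Apply λ_{I⊗a} to both sides of the hexagon at (a, I, I). *)
Lemma lunit_braid (a : M) : lunit a ∘ braid a I = runit a.
Proof.
  apply tensm_unit_inj_r, (iso_cancel_l (braid a I)); [apply is_iso_braid|].
  transitivity (lunit (tens I a) ∘ (assoc I I a ∘ braid a (tens I I) ∘ assoc a I I)).
  - rewrite hexagon, !cmp_assoc, lunit_nat, <- (cmp_assoc (assoc I a I)), lunit_tens.
    rewrite <- cmp_assoc, <- tensm_cmpl; reflexivity.
  - rewrite !cmp_assoc, lunit_tens, <- braid_nat, <- cmp_assoc, triangle; reflexivity.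
Qed.

Lemma braid_unit : braid I I = idm (tens I I).
Proof.
  apply (iso_cancel_l (lunit I)); [apply lunit_iso|].
  rewrite lunit_braid, cmp_idr; symmetry; apply lunit_unit.
Qed.

End SymmetricFacts.

Lemma is_theta_unit_terminal {A Z : MonCat} (F : MonFun A Z)
    (alpha : forall X : A, Hom (F X) (munit Z)) :
  (forall (Y : Z) (f g : Hom Y (munit Z)), f = g) ->
  (forall X, is_iso (alpha X)) -> is_theta F alpha.
Proof. intros Hunit Hiso; repeat split; intros; auto. Qed.

Lemma whisk_idF_l {M' M N : MonCat} (F : MonFun M N) (P : MonFun M' M)
    (phi : forall X : M, Hom (F X) (munit N)) :
  whisk (idF N) F P phi = fun X => phi (P X).
Proof. extensionality X; apply cmp_idl. Qed.

Lemma eq_rect_fob {A B : MonCat} (P : (A -> B) -> Type) (G1 G2 : MonFun A B)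
    (e : G1 = G2) (u : P (fob G1)) :
  eq_rect G1 (fun G => P (fob G)) u G2 e = eq_rect (fob G1) P u (fob G2) (f_equal fob e).
Proof. destruct e; reflexivity. Qed.

Lemma MonFun_eq_transport {A B : MonCat} (G : MonFun A B)
    (m : forall a b : A, Hom a b -> Hom (G a) (G b)) e ei t
    (P : (A -> B) -> Type) (u v : P (fob G)) :
  m = @fmap A B G -> e = fe G -> ei = fe_inv G -> t = fm G -> u = v ->
  exists E : Build_MonFun A B (fob G) m e ei t = G,
    eq_rect (Build_MonFun A B (fob G) m e ei t) (fun G => P (fob G)) u G E = v.
Proof. destruct G; simpl; intros; subst; exists eq_refl; reflexivity. Qed.

Lemma Build_MonFun_inj {A B : MonCat} (o : A -> B) m m' e e' ei ei' t t' :
  Build_MonFun A B o m e ei t = Build_MonFun A B o m' e' ei' t' ->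
  m = m' /\ e = e' /\ ei = ei' /\ t = t'.
Proof.
  intros E; injection E; intros.
  repeat match goal with H : existT _ _ _ = existT _ _ _ |- _ => apply inj_pair2 in H end.
  auto.
Qed.

Section Factorizations.
Context {O : Type} {U : O -> MonCat}.

Lemma kfact_unique {M N H K : O} {F : MonFun (U M) (U N)} {k : MonFun (U K) (U M)}
    {theta : forall X : U K, Hom (fcomp F k X) (munit (U N))}
    {h : MonFun (U H) (U M)} {phi : forall X : U H, Hom (fcomp F h X) (munit (U N))}
    {h1 h2 : MonFun (U H) (U K)} :
  kfact O U F k theta h phi h1 -> kfact O U F k theta h phi h2 ->
  (forall g g' : MonFun (U H) (U K),
     kfact O U F k theta (fcomp k g) (whisk (idF (U N)) (fcomp F k) g theta) g' -> g' = g) ->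
  h1 = h2.
Proof.
  intros [e1 E1] H2 Huniq; destruct e1; simpl in E1; subst phi.
  symmetry; exact (Huniq h1 h2 H2).
Qed.

Lemma cfact_unique {M N D C : O} {F : MonFun (U M) (U N)} {c : MonFun (U N) (U C)}
    {theta : forall X : U M, Hom (fcomp c F X) (munit (U C))}
    {d : MonFun (U N) (U D)} {psi : forall X : U M, Hom (fcomp d F X) (munit (U D))}
    {d1 d2 : MonFun (U C) (U D)} (P : MonFun (U C) (U D) -> Prop) :
  cfact O U F c theta d psi d1 -> cfact O U F c theta d psi d2 -> P d1 -> P d2 ->
  (forall g g' : MonFun (U C) (U D), P g -> P g' ->
     cfact O U F c theta (fcomp g c) (whisk g (fcomp c F) (idF (U M)) theta) g' -> g' = g) ->
  d1 = d2.
Proof.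
  intros [e1 E1] H2 P1 P2 Huniq; destruct e1; simpl in E1; subst psi.
  symmetry; exact (Huniq d1 d2 P1 P2 H2).
Qed.

End Factorizations.

Section ThetaFacts.
Context {A B : MonCat} (F : MonFun A B) (phi : forall X : A, Hom (F X) (munit B)).

Lemma theta_iso : is_theta F phi -> forall X, is_iso (phi X).
Proof. intros Hphi; apply Hphi. Qed.

Lemma theta_fm : is_theta F phi ->
  forall X Y, phi (tens X Y) ∘ fm F X Y = lunit (munit B) ∘ tensm (phi X) (phi Y).
Proof. intros Hphi; apply Hphi. Qed.

Lemma theta_fe : is_theta F phi -> phi (munit A) ∘ fe F = idm (munit B).
Proof. intros Hphi; apply Hphi. Qed.

Lemma theta_natural : is_theta F phi ->
  forall X Y (f : Hom X Y), phi Y ∘ fmap F f = phi X.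
Proof. intros [_ [Hnat _]] X Y f; rewrite Hnat; apply cmp_idl. Qed.

Lemma theta_fe_inv : is_monfun F -> is_theta F phi -> fe_inv F = phi (munit A).
Proof.
  intros HF Hphi.
  rewrite <- (cmp_idl (fe_inv F)), <- (theta_fe Hphi), <- cmp_assoc, (fe_invr _ HF).
  apply cmp_idr.
Qed.

Lemma is_theta_idF_l : is_theta (fcomp (idF B) F) phi -> is_theta F phi.
Proof.
  intros [Hiso [Hnat [Hfm Hfe]]]; repeat split; auto.
  - intros X Y; rewrite <- (cmp_idr (fm F X Y)); exact (Hfm X Y).
  - rewrite <- (cmp_idr (fe F)); exact Hfe.
Qed.

Lemma is_theta_idF_r : is_monfun F -> is_theta (fcomp F (idF A)) phi -> is_theta F phi.
Proof.
  intros HF [Hiso [Hnat [Hfm Hfe]]]; repeat split; auto.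
  - intros X Y; rewrite <- (cmp_idl (fm F X Y)), <- (fmap_id _ HF); exact (Hfm X Y).
  - rewrite <- (cmp_idl (fe F)), <- (fmap_id _ HF); exact Hfe.
Qed.

End ThetaFacts.

Lemma is_iso_fe_inv {A B : MonCat} (F : MonFun A B) : is_monfun F -> is_iso (fe_inv F).
Proof. intros HF; exists (fe F); split; [apply (fe_invr _ HF) | apply (fe_invl _ HF)]. Qed.

Section Kernel.
Variable M : MonCat.
Local Notation I := (munit M).

Record TrivObj := mkTrivObj { tcar : M; triv : Hom tcar I; triv_iso : is_iso triv }.

Definition TrivHom (X Y : TrivObj) := { f : Hom (tcar X) (tcar Y) | triv Y ∘ f = triv X }.

Lemma TrivHom_eq {X Y : TrivObj} (f g : TrivHom X Y) : proj1_sig f = proj1_sig g -> f = g.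
Proof. apply eq_sig_hprop; intros; apply proof_irrelevance. Qed.

Definition triv_idm (X : TrivObj) : TrivHom X X := exist _ (idm (tcar X)) (cmp_idr _).

Definition triv_cmp (X Y Z : TrivObj) (g : TrivHom Y Z) (f : TrivHom X Y) : TrivHom X Z.
Proof.
  exists (proj1_sig g ∘ proj1_sig f).
  rewrite cmp_assoc, (proj2_sig g); exact (proj2_sig f).
Defined.

Definition TrivCat : Category.
Proof.
  refine (Build_Category TrivObj TrivHom triv_idm triv_cmp _ _ _);
    intros; apply TrivHom_eq; simpl.
  - apply cmp_idl.
  - apply cmp_idr.
  - apply cmp_assoc.
Defined.

Lemma TrivHom_is_iso {X Y : TrivObj} (f : TrivHom X Y) :
  is_iso (proj1_sig f) -> @is_iso TrivCat X Y f.
Proof.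
  intros [g [Hgf Hfg]].
  assert (Hg : triv X ∘ g = triv Y).
  { rewrite <- (proj2_sig f), <- cmp_assoc, Hfg; apply cmp_idr. }
  exists (exist _ g Hg); split; apply TrivHom_eq; assumption.
Qed.

Definition triv_tens (X Y : TrivObj) : TrivObj :=
  mkTrivObj (tens (tcar X) (tcar Y)) (lunit I ∘ tensm (triv X) (triv Y))
    (is_iso_cmp _ _ (is_iso_tensm _ _ (triv_iso X) (triv_iso Y)) (lunit_iso I)).

Definition triv_unit : TrivObj := mkTrivObj I (idm I) (is_iso_idm I).

Definition triv_tensm (X X' Y Y' : TrivObj) (f : TrivHom X X') (g : TrivHom Y Y') :
  TrivHom (triv_tens X Y) (triv_tens X' Y').
Proof.
  exists (tensm (proj1_sig f) (proj1_sig g)); simpl.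
  rewrite <- cmp_assoc, <- tensm_cmp, (proj2_sig f), (proj2_sig g); reflexivity.
Defined.

Definition triv_assoc (X Y Z : TrivObj) :
  TrivHom (triv_tens (triv_tens X Y) Z) (triv_tens X (triv_tens Y Z)).
Proof.
  exists (assoc (tcar X) (tcar Y) (tcar Z)); simpl.
  rewrite tensm_cmpr, (cmp_assoc _ (tensm _ (lunit I))), <- cmp_assoc, <- assoc_nat.
  rewrite cmp_assoc, <- (cmp_assoc _ _ (lunit I)), triangle_unit, tensm_cmpl.
  symmetry; apply cmp_assoc.
Defined.

Definition triv_lunit (X : TrivObj) : TrivHom (triv_tens triv_unit X) X.
Proof. exists (lunit (tcar X)); symmetry; apply lunit_nat. Defined.

Definition triv_runit (X : TrivObj) : TrivHom (triv_tens X triv_unit) X.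
Proof. exists (runit (tcar X)); simpl; rewrite lunit_unit; symmetry; apply runit_nat. Defined.

Definition TrivMon : MonCat.
Proof.
  refine (Build_MonCat TrivCat triv_tens triv_tensm triv_unit
            triv_assoc triv_lunit triv_runit _ _ _ _ _ _ _ _ _ _);
    intros; first [apply TrivHom_is_iso | apply TrivHom_eq]; simpl.
  - apply tensm_id.
  - apply tensm_cmp.
  - apply assoc_iso.
  - apply lunit_iso.
  - apply runit_iso.
  - apply assoc_nat.
  - apply lunit_nat.
  - apply runit_nat.
  - apply pentagon.
  - apply triangle.
Defined.

Definition triv_forget : MonFun TrivMon M :=
  {| fob := fun X : TrivMon => tcar X;
     fmap := fun X Y (f : TrivHom X Y) => proj1_sig f;
     fe := idm I;
     fe_inv := idm I;
     fm := fun X Y => idm (tens (tcar X) (tcar Y)) |}.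

Definition triv_theta : forall X : TrivMon, Hom (fcomp (idF M) triv_forget X) I := triv.

Lemma triv_forget_monfun : is_monfun triv_forget.
Proof.
  constructor; simpl; intros; rewrite ?tensm_id, ?cmp_idl, ?cmp_idr;
    reflexivity || apply is_iso_idm.
Qed.

Lemma triv_theta_is_theta : is_theta (fcomp (idF M) triv_forget) triv_theta.
Proof.
  repeat split; simpl; intros; rewrite ?cmp_idl, ?cmp_idr; try reflexivity.
  - apply triv_iso.
  - apply (proj2_sig f).
Qed.

Definition triv_to_unit (X : TrivObj) : TrivHom X triv_unit := exist _ (triv X) (cmp_idl _).

Lemma triv_to_unit_unique (X : TrivMon) (f g : Hom X (munit TrivMon)) : f = g.
Proof.
  apply TrivHom_eq; destruct f as [f Hf], g as [g Hg]; simpl in *.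
  rewrite cmp_idl in Hf, Hg; congruence.
Qed.

Lemma is_theta_triv_to_unit {A : MonCat} (a : MonFun A TrivMon) :
  is_theta a (fun X => triv_to_unit (a X)).
Proof.
  apply is_theta_unit_terminal; [apply triv_to_unit_unique|].
  intros X; apply TrivHom_is_iso, triv_iso.
Qed.

Lemma TrivMon_theta_trivial : theta_trivial TrivMon.
Proof. exists triv_to_unit; apply (is_theta_triv_to_unit (idF TrivMon)). Qed.

Section Lift.
Variables (H : MonCat) (h : MonFun H M) (phi : forall X : H, Hom (h X) I).
Hypotheses (Hh : is_monfun h) (Hphi : is_theta h phi).

Definition triv_lift : MonFun H TrivMon.
Proof.
  refine (Build_MonFun H TrivMon
            (fun X => mkTrivObj (h X) (phi X) (theta_iso h phi Hphi X))
            (fun X Y f => exist _ (fmap h f) (theta_natural h phi Hphi X Y f))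
            (exist _ (fe h) (theta_fe h phi Hphi))
            (exist _ (fe_inv h) _)
            (fun X Y => exist _ (fm h X Y) (theta_fm h phi Hphi X Y))).
  simpl; rewrite cmp_idl; exact (theta_fe_inv h phi Hh Hphi).
Defined.

Lemma triv_lift_monfun : is_monfun triv_lift.
Proof.
  constructor; intros; try (apply TrivHom_is_iso, (fm_iso _ Hh)); apply TrivHom_eq; simpl.
  - apply (fmap_id _ Hh).
  - apply (fmap_cmp _ Hh).
  - apply (fe_invl _ Hh).
  - apply (fe_invr _ Hh).
  - apply (fm_nat _ Hh).
  - apply (fm_assoc _ Hh).
  - apply (fm_lunit _ Hh).
  - apply (fm_runit _ Hh).
Qed.

Lemma triv_lift_factors :
  exists e : fcomp triv_forget triv_lift = h,
    eq_rect (fcomp triv_forget triv_lift) (fun G : MonFun H M => forall X : H, Hom (G X) I)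
      (whisk (idF M) (fcomp (idF M) triv_forget) triv_lift triv_theta) h e = phi.
Proof.
  apply (MonFun_eq_transport h _ _ _ _ (fun o => forall X : H, Hom (o X) I)).
  - reflexivity.
  - apply cmp_idr.
  - apply cmp_idl.
  - extensionality X; extensionality Y; apply cmp_idr.
  - extensionality X; apply cmp_idl.
Qed.

End Lift.

Lemma mkTrivObj_fun_eq {H : Type} (c1 c2 : H -> M) (e : c1 = c2)
    (t1 : forall X, Hom (c1 X) I) (t2 : forall X, Hom (c2 X) I)
    (i1 : forall X, is_iso (t1 X)) (i2 : forall X, is_iso (t2 X)) :
  eq_rect c1 (fun c => forall X, Hom (c X) I) t1 c2 e = t2 ->
  (fun X => mkTrivObj (c1 X) (t1 X) (i1 X)) = (fun X => mkTrivObj (c2 X) (t2 X) (i2 X)).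
Proof.
  destruct e; simpl; intros <-.
  replace i2 with i1 by apply proof_irrelevance; reflexivity.
Qed.

Lemma TrivObj_fun_eq {H : Type} (o1 o2 : H -> TrivObj)
    (e : (fun X => tcar (o1 X)) = (fun X => tcar (o2 X))) :
  eq_rect _ (fun c => forall X, Hom (c X) I) (fun X => triv (o1 X)) _ e
    = (fun X => triv (o2 X)) -> o1 = o2.
Proof.
  intros E.
  assert (Heta : forall o : H -> TrivObj,
             (fun X => mkTrivObj (tcar (o X)) (triv (o X)) (triv_iso (o X))) = o).
  { intros o; extensionality X; destruct (o X); reflexivity. }
  rewrite <- (Heta o1), <- (Heta o2).
  exact (mkTrivObj_fun_eq _ _ e (fun X => triv (o1 X)) (fun X => triv (o2 X)) _ _ E).
Qed.

Lemma triv_lift_unique {H : MonCat} (g g' : MonFun H TrivMon)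
    (e : fcomp triv_forget g' = fcomp triv_forget g) :
  eq_rect (fcomp triv_forget g') (fun G : MonFun H M => forall X : H, Hom (G X) I)
    (whisk (idF M) (fcomp (idF M) triv_forget) g' triv_theta) (fcomp triv_forget g) e
  = whisk (idF M) (fcomp (idF M) triv_forget) g triv_theta -> g' = g.
Proof.
  rewrite (whisk_idF_l _ g'), (whisk_idF_l _ g); intros E.
  pose proof (eq_trans (eq_sym (eq_rect_fob (fun o => forall X : H, Hom (o X) I) _ _ e _)) E)
    as Eob.
  destruct g as [o m t ti u], g' as [o' m' t' ti' u'].
  assert (o' = o) by exact (TrivObj_fun_eq o' o _ Eob).
  subst o'; clear E Eob.
  apply Build_MonFun_inj in e; simpl in e; destruct e as [Em [Et [Eti Eu]]].
  rewrite !cmp_idr in Et; rewrite !cmp_idl in Eti.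
  f_equal.
  - extensionality X; extensionality Y; extensionality f.
    apply TrivHom_eq; exact (f_equal (fun F => F X Y f) Em).
  - apply TrivHom_eq; exact Et.
  - apply TrivHom_eq; exact Eti.
  - extensionality X; extensionality Y.
    apply TrivHom_eq.
    rewrite <- (cmp_idr (proj1_sig (u X Y))), <- (cmp_idr (proj1_sig (u' X Y))).
    exact (f_equal (fun F => F X Y) Eu).
Qed.

Lemma triv_forget_strong {A : MonCat} (a : MonFun A TrivMon)
    (phi : forall X : A, Hom (fcomp triv_forget a X) I) :
  (forall X, whisk (idF M) (fcomp triv_forget a) (idF A) phi X
             = whisk (idF M) (fcomp (idF M) triv_forget) a triv_theta X) ->
  exists alpha : forall X : A, Hom (a X) (munit TrivMon),
    is_theta a alpha /\
    (forall X, whisk triv_forget a (idF A) alpha X = phi X) /\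
    (forall beta : forall X : A, Hom (a X) (munit TrivMon),
       is_theta a beta -> (forall X, whisk triv_forget a (idF A) beta X = phi X) ->
       forall X, beta X = alpha X).
Proof.
  intros Hw; exists (fun X => triv_to_unit (a X)); split; [apply is_theta_triv_to_unit|split].
  - intros X; specialize (Hw X); unfold whisk in *; simpl in *.
    rewrite !cmp_idl in Hw; rewrite Hw; apply cmp_idl.
  - intros beta _ _ X; apply triv_to_unit_unique.
Qed.

End Kernel.

(* [m a b] is the image of the unique arrow a -> b of an indiscrete category. *)
Lemma indiscrete_functor_eq {C D : Category} (o : C -> D)
    (m m' : forall a b : C, Hom (o a) (o b)) (z : C) :
  (forall a, m a a = idm (o a)) -> (forall a b c, m a c = m b c ∘ m a b) ->
  (forall a b c, m' a c = m' b c ∘ m' a b) ->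
  (forall a, m' a a = idm (o a)) -> (forall a, m' a z = m a z) -> m' = m.
Proof.
  intros Hid Hcmp Hcmp' Hid' Hz.
  assert (Hfrom : forall b, m' z b = m z b).
  { intros b.
    rewrite <- (cmp_idr (m' z b)), <- (Hid z), (Hcmp z b z), cmp_assoc, <- Hz, <- Hcmp', Hid'.
    apply cmp_idl. }
  extensionality a; extensionality b.
  rewrite (Hcmp a z b), (Hcmp' a z b), Hfrom, Hz; reflexivity.
Qed.

Section Cokernel.
Variable M : MonCat.

Definition ChaoticCat : Category.
Proof.
  refine (Build_Category M (fun _ _ => unit) (fun _ => tt) (fun _ _ _ _ _ => tt) _ _ _);
    intros; repeat match goal with u : unit |- _ => destruct u end; reflexivity.
Defined.

Lemma chaotic_hom_eq {a b : ChaoticCat} (f g : Hom a b) : f = g.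
Proof. destruct f, g; reflexivity. Qed.

Lemma chaotic_is_iso {a b : ChaoticCat} (f : Hom a b) : is_iso f.
Proof. exists tt; split; apply chaotic_hom_eq. Qed.

Definition ChaoticMon : MonCat.
Proof.
  refine (Build_MonCat ChaoticCat (fun a b : M => tens a b) (fun _ _ _ _ _ _ => tt)
            (munit M) (fun _ _ _ => tt) (fun _ => tt) (fun _ => tt) _ _ _ _ _ _ _ _ _ _);
    intros; apply chaotic_hom_eq || apply chaotic_is_iso.
Defined.

Definition to_chaotic : MonFun M ChaoticMon :=
  Build_MonFun M ChaoticMon (fun X => X) (fun _ _ _ => tt) tt tt (fun _ _ => tt).

Definition chaotic_theta : forall X : M, Hom (fcomp to_chaotic (idF M) X) (munit ChaoticMon) :=
  fun _ => tt.

Lemma to_chaotic_monfun : is_monfun to_chaotic.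
Proof. constructor; intros; apply chaotic_hom_eq || apply chaotic_is_iso. Qed.

Lemma chaotic_theta_is_theta : is_theta (fcomp to_chaotic (idF M)) chaotic_theta.
Proof.
  apply is_theta_unit_terminal; intros; apply chaotic_hom_eq || apply chaotic_is_iso.
Qed.

Lemma ChaoticMon_theta_trivial : theta_trivial ChaoticMon.
Proof.
  exists (fun _ => tt).
  apply is_theta_unit_terminal; intros; apply chaotic_hom_eq || apply chaotic_is_iso.
Qed.

Section Descent.
Variables (D : MonCat) (d : MonFun M D) (psi : forall X : M, Hom (d X) (munit D)).
Hypotheses (Hd : is_monfun d) (Hpsi : is_theta d psi).

Definition chaotic_desc_map (a b : M) : Hom (d a) (d b) :=
  iso_inv (psi b) (theta_iso d psi Hpsi b) ∘ psi a.

Lemma chaotic_desc_map_id (a : M) : chaotic_desc_map a a = idm (d a).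
Proof. apply iso_invK. Qed.

Lemma chaotic_desc_map_cmp (a b c : M) :
  chaotic_desc_map a c = chaotic_desc_map b c ∘ chaotic_desc_map a b.
Proof.
  unfold chaotic_desc_map.
  rewrite cmp_assoc, <- (cmp_assoc _ (psi b)), iso_Kinv, cmp_idr; reflexivity.
Qed.

Lemma fmap_chaotic_desc_map {a b : M} (f : Hom a b) : fmap d f = chaotic_desc_map a b.
Proof.
  unfold chaotic_desc_map; rewrite <- (theta_natural d psi Hpsi a b f), cmp_assoc, iso_invK.
  symmetry; apply cmp_idl.
Qed.

Lemma fm_chaotic_desc_map (a b : M) :
  fm d a b = iso_inv (psi (tens a b)) (theta_iso d psi Hpsi _)
             ∘ (lunit (munit D) ∘ tensm (psi a) (psi b)).
Proof.
  rewrite <- (theta_fm d psi Hpsi a b), cmp_assoc, iso_invK; symmetry; apply cmp_idl.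
Qed.

Definition chaotic_desc : MonFun ChaoticMon D :=
  Build_MonFun ChaoticMon D (fun X : M => d X) (fun a b _ => chaotic_desc_map a b)
    (fe d) (fe_inv d) (fm d).

Lemma chaotic_desc_monfun : is_monfun chaotic_desc.
Proof.
  constructor; simpl; intros.
  - apply chaotic_desc_map_id.
  - apply chaotic_desc_map_cmp.
  - apply (fe_invl _ Hd).
  - apply (fe_invr _ Hd).
  - apply (fm_iso _ Hd).
  - rewrite !fm_chaotic_desc_map; unfold chaotic_desc_map.
    rewrite <- !cmp_assoc, <- tensm_cmp, !cmp_assoc, !iso_Kinv, !cmp_idl.
    rewrite <- (cmp_assoc _ (psi (tens a b))), iso_Kinv, cmp_idr; reflexivity.
  - rewrite <- (fmap_chaotic_desc_map (assoc a b c)); apply (fm_assoc _ Hd).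
  - rewrite <- (fmap_chaotic_desc_map (lunit b)); apply (fm_lunit _ Hd).
  - rewrite <- (fmap_chaotic_desc_map (runit a)); apply (fm_runit _ Hd).
Qed.

Lemma chaotic_desc_factors :
  exists e : fcomp chaotic_desc to_chaotic = d,
    eq_rect (fcomp chaotic_desc to_chaotic)
      (fun G : MonFun M D => forall X : M, Hom (G X) (munit D))
      (whisk chaotic_desc (fcomp to_chaotic (idF M)) (idF M) chaotic_theta) d e = psi.
Proof.
  apply (MonFun_eq_transport d _ _ _ _ (fun o => forall X : M, Hom (o X) (munit D))).
  - extensionality a; extensionality b; extensionality f.
    symmetry; apply fmap_chaotic_desc_map.
  - simpl; rewrite chaotic_desc_map_id; apply cmp_idl.
  - simpl; rewrite chaotic_desc_map_id; apply cmp_idr.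
  - extensionality a; extensionality b; simpl; rewrite chaotic_desc_map_id; apply cmp_idl.
  - extensionality X; unfold whisk; simpl; unfold chaotic_desc_map.
    rewrite (theta_fe_inv d psi Hd Hpsi), cmp_assoc, iso_Kinv; apply cmp_idl.
Qed.

End Descent.

Lemma chaotic_desc_unique {D : MonCat} (g g' : MonFun ChaoticMon D) :
  is_monfun g -> is_monfun g' ->
  forall e : fcomp g' to_chaotic = fcomp g to_chaotic,
  eq_rect (fcomp g' to_chaotic) (fun G : MonFun M D => forall X : M, Hom (G X) (munit D))
    (whisk g' (fcomp to_chaotic (idF M)) (idF M) chaotic_theta) (fcomp g to_chaotic) e
  = whisk g (fcomp to_chaotic (idF M)) (idF M) chaotic_theta -> g' = g.
Proof.
  intros Hg Hg' e E.
  pose proof (eq_trans (eq_sym (eq_rect_fob (fun o => forall X : M, Hom (o X) (munit D))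
                                   _ _ e _)) E) as Eob.
  destruct g as [o m t ti u], g' as [o' m' t' ti' u'].
  assert (o' = o) by exact (f_equal fob e).
  clear E; subst o'; rewrite (UIP_refl _ _ (f_equal fob e)) in Eob; simpl in Eob.
  apply Build_MonFun_inj in e; destruct e as [_ [Et [Eti Eu]]]; simpl in *.
  assert (Hid : forall a, m a a tt = idm (o a)) by exact (fmap_id _ Hg).
  assert (Hid' : forall a, m' a a tt = idm (o a)) by exact (fmap_id _ Hg').
  rewrite Hid, Hid', !cmp_idl in Et; rewrite Hid, Hid', !cmp_idr in Eti; subst t' ti'.
  (* [Eob] fixes the images of the arrows X -> I, and these determine a functor
     out of an indiscrete category. *)
  assert (Hm : (fun a b => m' a b tt) = (fun a b => m a b tt)).
  { apply (indiscrete_functor_eq (C := ChaoticCat) o _ _ (munit M)).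
    - exact Hid.
    - intros a b c; exact (fmap_cmp _ Hg a b c tt tt).
    - intros a b c; exact (fmap_cmp _ Hg' a b c tt tt).
    - exact Hid'.
    - intros X; apply (iso_cancel_l ti); [apply (is_iso_fe_inv _ Hg)|].
      exact (f_equal (fun F => F X) Eob). }
  f_equal.
  - extensionality a; extensionality b; extensionality f; destruct f.
    exact (f_equal (fun F => F a b) Hm).
  - extensionality a; extensionality b.
    pose proof (f_equal (fun F => F a b) Eu) as Eab; simpl in Eab.
    rewrite Hid, Hid', !cmp_idl in Eab; exact Eab.
Qed.

Lemma to_chaotic_strong {A : MonCat} (a : MonFun ChaoticMon A)
    (phi : forall Y : M, Hom (fcomp a to_chaotic Y) (munit A)) :
  is_monfun a -> is_theta (fcomp a to_chaotic) phi ->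
  (forall X, whisk (idF A) (fcomp a to_chaotic) (idF M) phi X
             = whisk a (fcomp to_chaotic (idF M)) (idF M) chaotic_theta X) ->
  exists alpha : forall Y : ChaoticMon, Hom (a Y) (munit A),
    is_theta a alpha /\
    (forall Y, whisk (idF A) a to_chaotic alpha Y = phi Y) /\
    (forall beta : forall Y : ChaoticMon, Hom (a Y) (munit A),
       is_theta a beta -> (forall Y, whisk (idF A) a to_chaotic beta Y = phi Y) ->
       forall Y, beta Y = alpha Y).
Proof.
  intros Ha [Hiso [_ [Hfm Hfe]]] Hw.
  assert (Hphi : forall X, phi X = fe_inv a ∘ fmap a (tt : Hom (X : ChaoticMon) (munit M))).
  { intros X; rewrite <- (cmp_idl (phi X)); exact (Hw X). }
  assert (Hid : forall X : ChaoticMon, fmap a (tt : Hom X X) = idm (a X)) by exact (fmap_id _ Ha).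
  exists phi; split; [repeat split|split].
  - exact Hiso.
  - intros X Y f; rewrite cmp_idl, !Hphi, <- cmp_assoc, <- (fmap_cmp _ Ha); reflexivity.
  - intros X Y; rewrite <- (cmp_idl (fm a X Y)), <- Hid; exact (Hfm X Y).
  - rewrite <- (cmp_idl (fe a)), <- Hid; exact Hfe.
  - intros Y; apply cmp_idl.
  - intros beta _ Hbeta Y; rewrite <- (Hbeta Y); symmetry; apply cmp_idl.
Qed.

End Cokernel.

Definition triv_braid {M : SymMonCat} (X Y : TrivObj M) :
  TrivHom M (triv_tens M X Y) (triv_tens M Y X).
Proof.
  exists (braid (tcar M X) (tcar M Y)); simpl.
  rewrite <- cmp_assoc, <- braid_nat, cmp_assoc, braid_unit, cmp_idr; reflexivity.
Defined.

Definition TrivSym (M : SymMonCat) : SymMonCat.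
Proof.
  refine (Build_SymMonCat (TrivMon M) triv_braid _ _ _); intros; apply TrivHom_eq; simpl.
  - apply braid_nat.
  - apply braid_invol.
  - apply hexagon.
Defined.

Definition ChaoticSym (M : SymMonCat) : SymMonCat.
Proof.
  refine (Build_SymMonCat (ChaoticMon M) (fun _ _ => tt) _ _ _); intros; apply chaotic_hom_eq.
Defined.

Lemma triv_forget_symfun (M : SymMonCat) : @is_symfun (TrivSym M) M (triv_forget M).
Proof. intros X Y; simpl; rewrite cmp_idl, cmp_idr; reflexivity. Qed.

Lemma triv_lift_symfun {M H : SymMonCat} (h : MonFun H M)
    (phi : forall X : H, Hom (h X) (munit M)) (Hh : is_monfun h) (Hphi : is_theta h phi) :
  is_symfun h -> @is_symfun H (TrivSym M) (triv_lift M H h phi Hh Hphi).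
Proof. intros Hs X Y; apply TrivHom_eq, Hs. Qed.

Lemma to_chaotic_symfun (M : SymMonCat) : @is_symfun M (ChaoticSym M) (to_chaotic M).
Proof. intros X Y; apply chaotic_hom_eq. Qed.

Lemma chaotic_desc_symfun {M D : SymMonCat} (d : MonFun M D)
    (psi : forall X : M, Hom (d X) (munit D)) (Hpsi : is_theta d psi) :
  is_symfun d -> @is_symfun (ChaoticSym M) D (chaotic_desc M D d psi Hpsi).
Proof.
  intros Hs X Y; simpl.
  rewrite <- (fmap_chaotic_desc_map M D d psi Hpsi (@braid M X Y)); apply Hs.
Qed.

Lemma MC_kernel_cokernel_of_id (M : MonCat) :
  kernel_cokernel_of_id MonCat (fun A => A) MC_ok M.
Proof.
  split.
  - exists (TrivMon M), (triv_forget M), (triv_theta M).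
    split; [split|apply TrivMon_theta_trivial].
    + split; [apply triv_forget_monfun|split; [apply triv_theta_is_theta|]].
      intros H h phi Hh Hphi; split.
      * exists (triv_lift M H h phi Hh (is_theta_idF_l h phi Hphi)).
        split; [apply triv_lift_monfun | apply triv_lift_factors].
      * intros h1 h2 _ _ F1 F2; apply (kfact_unique F1 F2).
        intros g g' [e E]; exact (triv_lift_unique M g g' e E).
    + intros A a phi _ _; apply triv_forget_strong.
  - exists (ChaoticMon M), (to_chaotic M), (chaotic_theta M).
    split; [split|apply ChaoticMon_theta_trivial].
    + split; [apply to_chaotic_monfun|split; [apply chaotic_theta_is_theta|]].
      intros D d psi Hd Hpsi; split.
      * exists (chaotic_desc M D d psi (is_theta_idF_r d psi Hd Hpsi)).
        split; [apply chaotic_desc_monfun, Hd | apply chaotic_desc_factors, Hd].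
      * intros d1 d2 H1 H2 F1 F2; apply (cfact_unique is_monfun F1 F2 H1 H2).
        intros g g' Hg Hg' [e E]; exact (chaotic_desc_unique M g g' Hg Hg' e E).
    + intros A a phi Ha; apply to_chaotic_strong, Ha.
Qed.

Lemma SMC_kernel_cokernel_of_id (M : SymMonCat) :
  kernel_cokernel_of_id SymMonCat smcat SMC_ok M.
Proof.
  split.
  - exists (TrivSym M), (triv_forget M), (triv_theta M).
    split; [split|apply TrivMon_theta_trivial].
    + split; [split; [apply triv_forget_monfun | apply triv_forget_symfun]|].
      split; [apply triv_theta_is_theta|].
      intros H h phi [Hh Hs] Hphi; split.
      * exists (triv_lift M H h phi Hh (is_theta_idF_l h phi Hphi)).
        split; [split; [apply triv_lift_monfun | apply triv_lift_symfun, Hs]|].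
        apply triv_lift_factors.
      * intros h1 h2 _ _ F1 F2; apply (kfact_unique F1 F2).
        intros g g' [e E]; exact (triv_lift_unique M g g' e E).
    + intros A a phi _ _; apply triv_forget_strong.
  - exists (ChaoticSym M), (to_chaotic M), (chaotic_theta M).
    split; [split|apply ChaoticMon_theta_trivial].
    + split; [split; [apply to_chaotic_monfun | apply to_chaotic_symfun]|].
      split; [apply chaotic_theta_is_theta|].
      intros D d psi [Hd Hs] Hpsi; split.
      * exists (chaotic_desc M D d psi (is_theta_idF_r d psi Hd Hpsi)).
        split; [split; [apply chaotic_desc_monfun, Hd | apply chaotic_desc_symfun, Hs]|].
        apply chaotic_desc_factors, Hd.
      * intros d1 d2 [H1 _] [H2 _] F1 F2; apply (cfact_unique is_monfun F1 F2 H1 H2).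
        intros g g' Hg Hg' [e E]; exact (chaotic_desc_unique M g g' Hg Hg' e E).
    + intros A a phi [Ha _]; apply to_chaotic_strong, Ha.
Qed.

Theorem proposition9p2 :
  (forall M : MonCat, kernel_cokernel_of_id MonCat (fun A => A) MC_ok M) /\
  (forall M : SymMonCat, kernel_cokernel_of_id SymMonCat smcat SMC_ok M).
Proof.
  split; [exact MC_kernel_cokernel_of_id | exact SMC_kernel_cokernel_of_id].
Qed.
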